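(* Let $\mathbb{X}=\{T,F\}$, $n\ge1$, and for $i=1,\dots,n$ let $Bel_{\mathbb{X}_i}$ be a belief function on $\mathbb{X}_i=\mathbb{X}$. Define the belief likelihood $Bel_{\mathbb{X}_1\times\cdots\times\mathbb{X}_n}$ as the combination $Bel_{\mathbb{X}_1}^{\uparrow}\odot\cdots\odot Bel_{\mathbb{X}_n}^{\uparrow}$ of the vacuous extensions to $\mathbb{X}_1\times\cdots\times\mathbb{X}_n$, where $\odot$ is either Dempster's rule $\oplus$ or the conjunctive rule. Then for every tuple $(x_1,\dots,x_n)$ with $x_i\in\mathbb{X}_i$, \[ Bel_{\mathbb{X}_1\times\cdots\times\mathbb{X}_n}(\{(x_1,\dots,x_n)\})=\prod_{i=1}^n Bel_{\mathbb{X}_i}(\{x_i\}). \]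
   Context: A mass function on a finite set $\Theta$ is $m:2^\Theta\to[0,1]$ with $\sum_A m(A)=1$ (for Dempster's rule also $m(\emptyset)=0$); belief function $Bel(A)=\sum_{B\subseteq A}m(B)$ (for unnormalised masses the sum is over non-empty $B\subseteq A$). With $m_\cap(A)=\sum_{B\cap C=A}m_1(B)m_2(C)$, Dempster's rule gives $m_\oplus(A)=m_\cap(A)/(1-m_\cap(\emptyset))$ for $A\neq\emptyset$, and the conjunctive rule gives $m(A)=m_\cap(A)$ for all $A$ including $\emptyset$. The vacuous extension of a belief function on $\mathbb{X}_i$ with mass $m_i$ to $\mathbb{X}_1\times\cdots\times\mathbb{X}_n$ assigns mass $m_i(B)$ to $\mathbb{X}_1\times\cdots\times\mathbb{X}_{i-1}\times B\times\mathbb{X}_{i+1}\times\cdots\times\mathbb{X}_n$ and $0$ elsewhere. (In the paper each $Bel_{\mathbb{X}_i}$ depends on a parameter $\theta$, which is held fixed.) *)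

From mathcomp Require Import all_boot all_order all_algebra.
Set Implicit Arguments. Unset Strict Implicit. Unset Printing Implicit Defensive.
Import Order.TTheory GRing.Theory Num.Theory.
Local Open Scope ring_scope.

Section DS.
Variable R : realFieldType.

(* A (possibly unnormalised) mass function on a finite frame T. *)
Definition is_mass (T : finType) (m : {set T} -> R) : Prop :=
  (forall A, 0 <= m A) /\ \sum_(A : {set T}) m A = 1.

(* Belief function: sum over non-empty subsets of A (coincides with the usual
   definition when m(emptyset) = 0). *)
Definition Bel (T : finType) (m : {set T} -> R) (A : {set T}) : R :=
  \sum_(B : {set T} | (B != set0) && (B \subset A)) m B.

Definition conj_comb (T : finType) (m1 m2 : {set T} -> R) (A : {set T}) : R :=
  \sum_(B : {set T}) \sum_(C : {set T} | B :&: C == A) m1 B * m2 C.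

Definition dempster (T : finType) (m1 m2 : {set T} -> R) (A : {set T}) : R :=
  if A == set0 then 0
  else conj_comb m1 m2 A / (1 - conj_comb m1 m2 set0).

Inductive comb_rule := Dempster | Conjunctive.

Definition apply_rule (r : comb_rule) (T : finType) :
  ({set T} -> R) -> ({set T} -> R) -> ({set T} -> R) :=
  match r with Dempster => @dempster T | Conjunctive => @conj_comb T end.

Definition vacuous (T : finType) (A : {set T}) : R := (A == setT)%:R.

(* The product frame X_1 x ... x X_n with X_i = X = {T, F} = bool. *)
Definition prodX (n : nat) := {ffun 'I_n -> bool}.

Definition cyl (n : nat) (i : 'I_n) (B : {set bool}) : {set prodX n} :=
  [set x : prodX n | x i \in B].

Definition vac_ext (n : nat) (i : 'I_n) (m : {set bool} -> R)
    (A : {set prodX n}) : R :=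
  \sum_(B : {set bool} | A == cyl i B) m B.

(* Belief likelihood: Bel_1^up (.) ... (.) Bel_n^up (mass function),
   combined right-nested with the vacuous mass as neutral element. *)
Definition belief_likelihood (r : comb_rule) (n : nat)
    (m : 'I_n -> {set bool} -> R) : {set prodX n} -> R :=
  \big[apply_rule r (T := prodX n) / vacuous (T := prodX n)]_(i < n)
     vac_ext i (m i).

End DS.

From mathcomp Require Import all_boot all_order all_algebra.
Set Implicit Arguments. Unset Strict Implicit. Unset Printing Implicit Defensive.
Import Order.TTheory GRing.Theory Num.Theory.
Local Open Scope ring_scope.

(* The combination of the vacuous extensions of m_j for j ranging over a
   duplicate-free list s of coordinates only charges boxes: sets constrained
   on the coordinates of s and free on the others.  A cylinder on a fresh
   coordinate i and a box on s meet whenever both are nonempty, and their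
   intersection determines them.  Hence the point box {x} is reached by the
   single pair (cylinder over {x_i}, point box on s), so its mass factorises,
   and Dempster's rule meets no conflict, so it divides by 1.  Finally the
   belief of a singleton is its mass. *)

Section Combination.
Variables (R : realFieldType) (T : finType).
Implicit Types (A B C : {set T}).

Lemma sumr_neq0_exists (I : finType) (P : pred I) (F : I -> R) :
  \sum_(i | P i) F i != 0 -> exists2 i, P i & F i != 0.
Proof.
move=> nzF; have /existsP[i /andP[Pi nzFi]] : [exists i, P i && (F i != 0)].
  apply: contraNT nzF => /existsPn noF; rewrite big1 // => i Pi.
  by apply/eqP; move: (noF i); rewrite Pi negbK.
by exists i.
Qed.

Lemma conj_comb_neq0 (m1 m2 : {set T} -> R) A : conj_comb m1 m2 A != 0 ->
  exists B C, [/\ B :&: C = A, m1 B != 0 & m2 C != 0].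
Proof.
rewrite /conj_comb pair_big_dep => /sumr_neq0_exists[[B C] /= /eqP BC].
by rewrite mulf_eq0 negb_or => /andP[nzB nzC]; exists B, C.
Qed.

Lemma conj_comb_unique (m1 m2 : {set T} -> R) A B0 C0 : B0 :&: C0 = A ->
    (forall B C, B :&: C = A -> m1 B != 0 -> m2 C != 0 -> B = B0 /\ C = C0) ->
  conj_comb m1 m2 A = m1 B0 * m2 C0.
Proof.
move=> BC0 only_pair; rewrite /conj_comb pair_big_dep (bigD1 (B0, C0)) /=;
  last by rewrite BC0.
rewrite big1 ?addr0 // => -[B C] /= /andP[/eqP BC neq0].
apply/eqP; apply: contraNT neq0; rewrite mulf_eq0 negb_or => /andP[nzB nzC].
by have [-> ->] := only_pair B C BC nzB nzC.
Qed.

Lemma apply_rule_neq0 r (m1 m2 : {set T} -> R) A :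
  apply_rule r m1 m2 A != 0 -> conj_comb m1 m2 A != 0.
Proof.
case: r => //=; rewrite /dempster; case: ifP => _; first by rewrite eqxx.
by apply: contraNneq => ->; rewrite mul0r.
Qed.

Lemma apply_rule_conj r (m1 m2 : {set T} -> R) A :
    (r = Dempster -> conj_comb m1 m2 set0 = 0) -> A != set0 ->
  apply_rule r m1 m2 A = conj_comb m1 m2 A.
Proof.
case: r => //= /(_ erefl) no_conflict nzA.
by rewrite /dempster (negbTE nzA) no_conflict subr0 divr1.
Qed.

Lemma vacuous_set0 (t : T) : @vacuous R T set0 = 0.
Proof.
rewrite /vacuous; case: eqP => // /setP/(_ t).
by rewrite !inE.
Qed.

Lemma Bel_set1 (m : {set T} -> R) (t : T) : Bel m [set t] = m [set t].
Proof.
rewrite /Bel (bigD1 [set t]) /=; last first.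
  by rewrite subxx andbT; apply/set0Pn; exists t; rewrite inE.
rewrite big1 ?addr0 // => B /andP[/andP[nzB]].
by rewrite subset1 (negbTE nzB) orbF => ->.
Qed.

End Combination.

Section Boxes.
Variable n : nat.
Implicit Types (s : seq 'I_n) (y : prodX n) (B : {set bool}).

Definition box s (Bs : 'I_n -> {set bool}) : {set prodX n} :=
  [set y : prodX n | all (fun j => y j \in Bs j) s].

Definition ffun_upd y (i : 'I_n) (b : bool) : prodX n :=
  [ffun j => if j == i then b else y j].

Lemma box_nil Bs : box [::] Bs = setT.
Proof. by apply/setP => y; rewrite !inE. Qed.

Lemma box_cons i s Bs : box (i :: s) Bs = cyl i (Bs i) :&: box s Bs.
Proof. by apply/setP => y; rewrite !inE. Qed.

Lemma in_cyl i B y : (y \in cyl i B) = (y i \in B).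
Proof. by rewrite inE. Qed.

Lemma ffun_upd_at y i b : ffun_upd y i b i = b.
Proof. by rewrite ffunE eqxx. Qed.

Lemma eq_in_box i s (Bs Cs : 'I_n -> {set bool}) : i \notin s ->
  (forall j, j != i -> Bs j = Cs j) -> box s Bs = box s Cs.
Proof.
move=> i_s eqBC; apply/setP => y; rewrite !inE; apply: eq_in_all => j j_s.
by rewrite eqBC //; apply: contraNneq i_s => <-.
Qed.

Lemma box_upd y i b s Bs : i \notin s ->
  (ffun_upd y i b \in box s Bs) = (y \in box s Bs).
Proof.
move=> i_s; rewrite !inE; apply: eq_in_all => j j_s; rewrite ffunE.
by case: eqP => // ji; move: j_s; rewrite ji (negbTE i_s).
Qed.

Lemma cyl_inj i : injective (@cyl n i).
Proof.
move=> B B' /setP eqBB'; apply/setP => b.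
by have := eqBB' [ffun=> b]; rewrite !inE ffunE.
Qed.

Lemma cyl_box i s B Bs : i \notin s ->
  cyl i B :&: box s Bs = box (i :: s) (fun j => if j == i then B else Bs j).
Proof.
move=> i_s; rewrite box_cons eqxx; congr (_ :&: _).
by apply: (eq_in_box i_s) => j /negbTE ->.
Qed.

Lemma cyl_box_neq0 i s B Bs : i \notin s ->
  B != set0 -> box s Bs != set0 -> cyl i B :&: box s Bs != set0.
Proof.
move=> i_s /set0Pn[b Bb] /set0Pn[y yBs]; apply/set0Pn; exists (ffun_upd y i b).
by rewrite inE box_upd // yBs andbT inE ffun_upd_at.
Qed.

Lemma cyl_box_inj i s B B' Bs Bs' : i \notin s ->
    cyl i B :&: box s Bs = cyl i B' :&: box s Bs' ->
    cyl i B' :&: box s Bs' != set0 ->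
  B = B' /\ box s Bs = box s Bs'.
Proof.
move=> i_s eqBB' /set0Pn[y yB']; have yB := yB'; rewrite -eqBB' in yB.
move: yB yB'; rewrite !in_setI !in_cyl => /andP[yiB yBs] /andP[yiB' yBs'].
split; apply/setP.
- move=> b; have /setP/(_ (ffun_upd y i b)) := eqBB'.
  by rewrite !in_setI !in_cyl !box_upd // yBs yBs' ffun_upd_at !andbT.
- move=> z; have /setP/(_ (ffun_upd z i (y i))) := eqBB'.
  by rewrite !in_setI !in_cyl !box_upd // ffun_upd_at yiB yiB'.
Qed.

Lemma box_set1 (x : prodX n) :
  box (index_enum 'I_n) (fun j => [set x j]) = [set x].
Proof.
apply/setP => y; rewrite !inE; apply/allP/eqP => [y_x|->]; last first.
  by move=> j _; rewrite inE.
by apply/ffunP => j; apply/eqP; rewrite -in_set1 y_x ?mem_index_enum.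
Qed.

End Boxes.

Section Likelihood.
Variables (R : realFieldType) (r : comb_rule) (n : nat).
Variable m : 'I_n -> {set bool} -> R.
Hypothesis m_set0 : r = Dempster -> forall i, m i set0 = 0.
Implicit Types (i : 'I_n) (s : seq 'I_n) (B : {set bool}) (A : {set prodX n}).

Definition comb_vac_ext s : {set prodX n} -> R :=
  \big[@apply_rule R r (prodX n) / @vacuous R (prodX n)]_(i <- s) vac_ext i (m i).

Lemma vac_ext_cyl i (mi : {set bool} -> R) B : vac_ext i mi (cyl i B) = mi B.
Proof.
rewrite /vac_ext (big_pred1 B) // => B'.
by rewrite /= eq_sym (inj_eq (@cyl_inj n i)).
Qed.

Lemma vac_ext_neq0 i (mi : {set bool} -> R) A :
  vac_ext i mi A != 0 -> exists2 B, A = cyl i B & mi B != 0.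
Proof. by move=> /sumr_neq0_exists[B /eqP AB nzB]; exists B. Qed.

Lemma comb_vac_ext_set0 s : r = Dempster -> comb_vac_ext s set0 = 0.
Proof.
move=> rD; case: s => [|i s]; rewrite /comb_vac_ext.
- by rewrite big_nil (vacuous_set0 _ [ffun=> true]).
- by rewrite big_cons rD /= /dempster eqxx.
Qed.

Lemma comb_vac_ext_support s A : uniq s -> comb_vac_ext s A != 0 ->
  exists Bs, A = box s Bs.
Proof.
elim: s A => [|i s IHs] A /=.
  rewrite /comb_vac_ext big_nil /vacuous => _.
  have [-> _|_] := eqVneq A setT; last by rewrite eqxx.
  by exists (fun _ => set0); rewrite box_nil.
move=> /andP[i_s uniq_s]; rewrite /comb_vac_ext big_cons.
move=> /apply_rule_neq0/conj_comb_neq0[_ [C [<- /vac_ext_neq0[B -> _] nzC]]].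
have [Bs ->] := IHs C uniq_s nzC.
by exists (fun j => if j == i then B else Bs j); rewrite cyl_box.
Qed.

Lemma no_conflict_vac_ext i s : i \notin s -> uniq s -> r = Dempster ->
  conj_comb (vac_ext i (m i)) (comb_vac_ext s) set0 = 0.
Proof.
move=> i_s uniq_s rD; apply/eqP; apply: contraT.
move=> /conj_comb_neq0[Bv [C [disjBC /vac_ext_neq0[B eqB nzB] nzC]]].
have [Bs eqC] := comb_vac_ext_support uniq_s nzC.
have nzBs : box s Bs != set0.
  by apply: contraNneq nzC => Bs0; rewrite eqC Bs0 comb_vac_ext_set0.
have nzB0 : B != set0 by apply: contraNneq nzB => ->; rewrite m_set0.
by move: (cyl_box_neq0 i_s nzB0 nzBs); rewrite -eqC -eqB disjBC eqxx.
Qed.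

Lemma comb_vac_ext_point s (x : prodX n) : uniq s ->
  comb_vac_ext s (box s (fun j => [set x j])) = \prod_(j <- s) m j [set x j].
Proof.
set X := fun j => [set x j].
elim: s => [|i s IHs] /=.
  by rewrite /comb_vac_ext !big_nil box_nil /vacuous eqxx.
move=> /andP[i_s uniq_s]; rewrite /comb_vac_ext !big_cons -/(comb_vac_ext s).
have nz_point : box (i :: s) X != set0.
  by apply/set0Pn; exists x; rewrite inE; apply/allP => j _; rewrite inE.
rewrite apply_rule_conj //; last exact: no_conflict_vac_ext.
rewrite box_cons in nz_point *.
rewrite (conj_comb_unique (B0 := cyl i (X i)) (C0 := box s X)) //.
  by rewrite vac_ext_cyl IHs.
move=> Bv C eqBC /vac_ext_neq0[B eqBv _] nzC.
have [Bs eqC] := comb_vac_ext_support uniq_s nzC.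
rewrite eqBv eqC in eqBC *.
by have [-> ->] := cyl_box_inj i_s eqBC nz_point.
Qed.

End Likelihood.

Theorem theorem1 (R : realFieldType) (r : comb_rule) (n : nat) (hn : (1 <= n)%N)
  (m : 'I_n -> {set bool} -> R)
  (hm : forall i, is_mass (m i))
  (hD : r = Dempster -> forall i, m i set0 = 0)
  (x : prodX n) :
  Bel (belief_likelihood r m) [set x] = \prod_(i < n) Bel (m i) [set x i].
Proof.
rewrite Bel_set1; under eq_bigr => i _ do rewrite Bel_set1.
rewrite -box_set1; apply: (comb_vac_ext_point hD x (index_enum_uniq 'I_n)).
Qed.
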